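(* Let $s_{\mathrm{pub}}$ be a public state of a finite two-player zero-sum game with perfect recall, and let $\beta=(\beta_1,\beta_2)$ be a public belief state at $s_{\mathrm{pub}}$. Let $\pi^*$ be any Nash equilibrium of the subgame rooted at $\beta$. Then there exist a concave function $\tilde V_1:\mathbb{R}_{\ge 0}^{S_1(s_{\mathrm{pub}})}\to\mathbb{R}$ extending $V_1$ to unnormalized beliefs, i.e. with $\tilde V_1(x)=V_1\big((x,\beta_2)\big)$ for every probability distribution $x$ on $S_1(s_{\mathrm{pub}})$, and a supergradient $\bar g\in\mathbb{R}^{S_1(s_{\mathrm{pub}})}$ of $\tilde V_1$ at $\beta_1$ (that is, $\tilde V_1(y)\le \tilde V_1(\beta_1)+\bar g\cdot(y-\beta_1)$ for all $y\in\mathbb{R}_{\ge0}^{S_1(s_{\mathrm{pub}})}$), such that for every infostate $s_1\in S_1(s_{\mathrm{pub}})$, $$v_1^{\pi^*}(s_1\mid\beta)=V_1(\beta)+\bar g\cdot \hat s_1,$$ where $\hat s_1$ is the unit coordinate vector in direction $s_1$.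
   Context: Setting: a finite two-player zero-sum game (rewards satisfy $\mathcal R_1=-\mathcal R_2$) with perfect recall, described by world states, joint actions, a stochastic transition function, and for each player private and public observations. A history $h$ is a finite sequence of world states and joint actions; an infostate $s_i$ of player $i$ is the sequence of player $i$'s observations and own actions; $\mathcal H(s_i)$ is the set of histories consistent with $s_i$ and $s_i(h)$ is the infostate of player $i$ at $h$. A public state $s_{\mathrm{pub}}$ is a sequence of public observations; $\mathcal H(s_{\mathrm{pub}})$ is the set of histories consistent with it and $S_i(s_{\mathrm{pub}})$ the set of infostates of player $i$ consistent with it. A policy maps infostates to distributions over legal actions; $v_i^{\pi}(h)$ is the expected sum of future rewards of player $i$ from history $h$ when the profile $\pi$ is played. A public belief state (PBS) at $s_{\mathrm{pub}}$ is $\beta=(\beta_1,\beta_2)$ with $\beta_i$ a probability distribution on $S_i(s_{\mathrm{pub}})$. It induces a distribution $p(\cdot\mid\beta)$ on $\mathcal H(s_{\mathrm{pub}})$ of the form $p(h\mid\beta)=\beta_1(s_1(h))\,p(h\mid s_1(h),\beta_2)$, where for each $s_1$, $p(\cdot\mid s_1,\beta_2)$ is a probability distribution on $\mathcal H(s_1)\cap\mathcal H(s_{\mathrm{pub}})$ determined only by $s_1$ and $\beta_2$. The subgame rooted at $\beta$ is the game in which a history $h$ is drawn from $p(\cdot\mid\beta)$ (each player learning only their own infostate) and play then continues as in the original game. For a profile $\pi$ of this subgame, $V_1^{\pi}(\beta)=\sum_{h\in\mathcal H(s_{\mathrm{pub}})}p(h\mid\beta)v_1^{\pi}(h)$, and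 $V_1(\beta)$ denotes the value of the subgame to player 1 (the common value $V_1^{\pi^*}(\beta)$ over Nash equilibria $\pi^*$ of the subgame). The infostate value is $$v_1^{\pi^*}(s_1\mid\beta)=\max_{\pi_1}\sum_{h\in\mathcal H(s_1)}p(h\mid s_1,\beta_2)\,v_1^{\langle\pi_1,\pi_2^*\rangle}(h).$$ *)

From HB Require Import structures.
From mathcomp Require Import all_boot all_order all_algebra.
From mathcomp Require Import boolp classical_sets reals.

Set Implicit Arguments.
Unset Strict Implicit.
Unset Printing Implicit Defensive.

Import Order.TTheory GRing.Theory Num.Theory.
Local Open Scope ring_scope.
Local Open Scope classical_set_scope.

(* A finite two-player game in factored-observation form.
   - world states W, per-player actions A1, A2, initial world state w0,
   - terminal world states [term], legal actions [legal1], [legal2],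
   - stochastic transition [trans w a1 a2 w'] (probability of w' after
     joint action (a1,a2) in w),
   - rewards [rew1], [rew2] received on a transition,
   - private observations [obs1], [obs2] and public observation [obsP]
     emitted on a transition,
   - [horizon]: a bound on the length of every history (finiteness). *)
Record game (R : realType) := Game {
  W : finType; A1 : finType; A2 : finType;
  O1 : finType; O2 : finType; OP : finType;
  w0 : W;
  term : pred W;
  legal1 : W -> {set A1};
  legal2 : W -> {set A2};
  trans : W -> A1 -> A2 -> W -> R;
  rew1 : W -> A1 -> A2 -> W -> R;
  rew2 : W -> A1 -> A2 -> W -> R;
  obs1 : W -> A1 -> A2 -> W -> O1;
  obs2 : W -> A1 -> A2 -> W -> O2;
  obsP : W -> A1 -> A2 -> W -> OP;
  horizon : nat
}.

Section Game.
Variable R : realType.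
Variable G : game R.

(* one step of a history: joint action followed by the resulting world state;
   a history w0 a^0 w^1 a^1 ... w^t is the sequence of its steps *)
Definition step := (A1 G * A2 G * W G)%type.
Definition info1 := seq (A1 G * O1 G * OP G)%type.
Definition info2 := seq (A2 G * O2 G * OP G)%type.
Definition pubstate := seq (OP G).

Definition hstate (h : seq step) : W G := last (w0 G) [seq x.2 | x <- h].

Fixpoint valid_from (w : W G) (h : seq step) : bool :=
  match h with
  | [::] => true
  | ((a1, a2), w') :: t =>
      [&& ~~ term w, a1 \in legal1 w, a2 \in legal2 w,
          0 < trans w a1 a2 w' & valid_from w' t]
  end.
Definition is_hist (h : seq step) : bool := valid_from (w0 G) h.

Fixpoint info1_from (w : W G) (h : seq step) : info1 :=
  match h with
  | [::] => [::]
  | ((a1, a2), w') :: t =>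
      (a1, obs1 w a1 a2 w', obsP w a1 a2 w') :: info1_from w' t
  end.
Fixpoint info2_from (w : W G) (h : seq step) : info2 :=
  match h with
  | [::] => [::]
  | ((a1, a2), w') :: t =>
      (a2, obs2 w a1 a2 w', obsP w a1 a2 w') :: info2_from w' t
  end.
Fixpoint pub_from (w : W G) (h : seq step) : pubstate :=
  match h with
  | [::] => [::]
  | ((a1, a2), w') :: t => obsP w a1 a2 w' :: pub_from w' t
  end.
Definition s1of (h : seq step) : info1 := info1_from (w0 G) h.
Definition s2of (h : seq step) : info2 := info2_from (w0 G) h.
Definition spubof (h : seq step) : pubstate := pub_from (w0 G) h.

Definition wf_game : Prop :=
  [/\ (forall w : W G, ~~ term w -> (exists a, a \in legal1 w) /\ (exists a, a \in legal2 w)),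
      (forall (w : W G) a1 a2, ~~ term w -> a1 \in legal1 w -> a2 \in legal2 w ->
         (forall w', 0 <= trans w a1 a2 w') /\ \sum_w' trans w a1 a2 w' = 1),
      (forall (w : W G) a1 a2 w', rew1 w a1 a2 w' = - rew2 w a1 a2 w'),
      (forall h, is_hist h -> (size h <= horizon G)%N) &
      (forall h h', is_hist h -> is_hist h' ->
         ~~ term (hstate h) -> ~~ term (hstate h') ->
         (s1of h = s1of h' -> legal1 (hstate h) = legal1 (hstate h')) /\
         (s2of h = s2of h' -> legal2 (hstate h) = legal2 (hstate h')))].

Definition policy1 := info1 -> A1 G -> R.
Definition policy2 := info2 -> A2 G -> R.

Definition valid_pol1 (p : policy1) : Prop :=
  forall h, is_hist h -> ~~ term (hstate h) ->
    [/\ forall a, 0 <= p (s1of h) a,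
        forall a, a \notin legal1 (hstate h) -> p (s1of h) a = 0 &
        \sum_a p (s1of h) a = 1].
Definition valid_pol2 (p : policy2) : Prop :=
  forall h, is_hist h -> ~~ term (hstate h) ->
    [/\ forall a, 0 <= p (s2of h) a,
        forall a, a \notin legal2 (hstate h) -> p (s2of h) a = 0 &
        \sum_a p (s2of h) a = 1].

Fixpoint val_fuel (rew : W G -> A1 G -> A2 G -> W G -> R)
    (p1 : policy1) (p2 : policy2) (k : nat) (h : seq step) : R :=
  match k with
  | 0 => 0
  | k'.+1 =>
      let w := hstate h in
      if term w then 0 else
      \sum_(a1 : A1 G) \sum_(a2 : A2 G) \sum_(w' : W G)
        p1 (s1of h) a1 * p2 (s2of h) a2 * trans w a1 a2 w' *
        (rew w a1 a2 w' + val_fuel rew p1 p2 k' (rcons h (a1, a2, w')))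
  end.

Definition v1 (p1 : policy1) (p2 : policy2) (h : seq step) : R :=
  val_fuel (@rew1 _ G) p1 p2 (horizon G) h.
Definition v2 (p1 : policy1) (p2 : policy2) (h : seq step) : R :=
  val_fuel (@rew2 _ G) p1 p2 (horizon G) h.

(* H(s_pub), enumerated (all such histories have length |s_pub|) *)
Definition Hpub (s : pubstate) : seq (seq step) :=
  [seq tval t | t <- enum [pred t : (size s).-tuple step |
                              is_hist t && (spubof t == s)]].
Definition S1pub (s : pubstate) : seq info1 := undup [seq s1of h | h <- Hpub s].
Definition S2pub (s : pubstate) : seq info2 := undup [seq s2of h | h <- Hpub s].

Definition is_dist1 (s : pubstate) (x : info1 -> R) : Prop :=
  (forall s1, s1 \in S1pub s -> 0 <= x s1) /\ \sum_(s1 <- S1pub s) x s1 = 1.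
Definition is_dist2 (s : pubstate) (x : info2 -> R) : Prop :=
  (forall s2, s2 \in S2pub s -> 0 <= x s2) /\ \sum_(s2 <- S2pub s) x s2 = 1.

(* The conditional p(h | s_1, beta_2): a kernel [K b2 s1 h] which, for each
   s1 in S_1(s_pub), is a probability distribution on H(s1) ∩ H(s_pub). *)
Definition kernel := (info2 -> R) -> info1 -> seq step -> R.
Definition kernel_ok (s : pubstate) (K : kernel) (b2 : info2 -> R) : Prop :=
  forall s1, s1 \in S1pub s ->
    [/\ forall h, h \in Hpub s -> 0 <= K b2 s1 h,
        forall h, h \in Hpub s -> s1of h != s1 -> K b2 s1 h = 0 &
        \sum_(h <- Hpub s | s1of h == s1) K b2 s1 h = 1].

Definition pbs_prob (K : kernel) (b1 : info1 -> R) (b2 : info2 -> R)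
    (h : seq step) : R := b1 (s1of h) * K b2 (s1of h) h.

Definition V1pi (s : pubstate) (K : kernel) (b1 : info1 -> R) (b2 : info2 -> R)
    (p1 : policy1) (p2 : policy2) : R :=
  \sum_(h <- Hpub s) pbs_prob K b1 b2 h * v1 p1 p2 h.
Definition V2pi (s : pubstate) (K : kernel) (b1 : info1 -> R) (b2 : info2 -> R)
    (p1 : policy1) (p2 : policy2) : R :=
  \sum_(h <- Hpub s) pbs_prob K b1 b2 h * v2 p1 p2 h.

Definition is_NE (s : pubstate) (K : kernel) (b1 : info1 -> R) (b2 : info2 -> R)
    (p1 : policy1) (p2 : policy2) : Prop :=
  [/\ valid_pol1 p1, valid_pol2 p2,
      (forall q1, valid_pol1 q1 -> V1pi s K b1 b2 q1 p2 <= V1pi s K b1 b2 p1 p2) &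
      (forall q2, valid_pol2 q2 -> V2pi s K b1 b2 p1 q2 <= V2pi s K b1 b2 p1 p2)].

Definition infoval1 (s : pubstate) (K : kernel) (b2 : info2 -> R)
    (p2 : policy2) (s1 : info1) : R :=
  sup [set r | exists q1, valid_pol1 q1 /\
         r = \sum_(h <- Hpub s | s1of h == s1) K b2 s1 h * v1 q1 p2 h].

(* points of R_{>=0}^{S_1(s_pub)}, represented as functions on infostates
   (only the coordinates in S_1(s_pub) are used) *)
Definition nonneg_on (s : pubstate) (x : info1 -> R) : Prop :=
  forall s1, s1 \in S1pub s -> 0 <= x s1.

Definition concave_on (s : pubstate) (F : (info1 -> R) -> R) : Prop :=
  forall x y t, nonneg_on s x -> nonneg_on s y -> 0 <= t <= 1 ->
    t * F x + (1 - t) * F y <= F (fun s1 => t * x s1 + (1 - t) * y s1).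

End Game.

From HB Require Import structures.
From mathcomp Require Import all_boot all_order all_algebra.
From mathcomp Require Import boolp classical_sets reals.
From mathcomp Require Import ring lra.
Import Order.TTheory GRing.Theory Num.Theory.
Local Open Scope ring_scope.
Local Open Scope classical_set_scope.

(* For a policy q2 of player 2 and an infostate s1 let
   infoval1 s1 q2 be the best value player 1 can secure at s1 against q2.
   For a point y of R_{>=0}^{S_1(s_pub)} the map
       q2 |-> L y q2 := sum_{s1} y(s1) * infoval1 s1 q2      (belief_payoff)
   is linear in y, so  y |-> inf_{q2} L y q2  is concave.  At a Nash
   equilibrium (q1, q2) of the subgame rooted at (x, b2), q1 is a best
   response at every infostate of positive belief, hence L x q2 = V_1(x);
   minimality of q2 turns this into  inf_{q2'} L x q2' = V_1(x).  At beta_1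
   the linear function L _ p2 touches the infimum, which yields the
   supergradient g(s1) = infoval1 s1 p2 - V_1(beta); the correction term
   V_1(beta) * (1 - sum_{s1} y(s1)) keeps the extension equal to V_1 on
   distributions while shifting the supergradient by the constant V_1(beta). *)

Set Implicit Arguments.
Unset Strict Implicit.

Section Histories.
Variable R : realType.
Variable G : game R.

Lemma s1of_cat (h e : seq (step G)) :
  s1of (h ++ e) = s1of h ++ info1_from (hstate h) e.
Proof.
rewrite /s1of /hstate; elim: h (w0 G) => [|[[a1 a2] w'] t IH] w //=.
by rewrite IH.
Qed.

Lemma size_info1_from (w : W G) (h : seq (step G)) :
  size (info1_from w h) = size h.
Proof. by elim: h w => [|[[a1 a2] w'] t IH] w //=; rewrite IH. Qed.

Lemma val_fuel_local rew (p p' : policy1 G) (q : policy2 G) k h :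
  (forall e, p (s1of (h ++ e)) = p' (s1of (h ++ e))) ->
  val_fuel rew p q k h = val_fuel rew p' q k h.
Proof.
elim: k h => [|k IH] h Hp //=; case: ifP => // _.
have -> : p (s1of h) = p' (s1of h) by have := Hp [::]; rewrite cats0.
apply: eq_bigr => a1 _; apply: eq_bigr => a2 _; apply: eq_bigr => w' _.
congr (_ * (_ + _)); apply: IH => e.
by rewrite -cats1 -catA; apply: Hp.
Qed.

Lemma val_fuel_opp (p : policy1 G) (q : policy2 G) k h :
  (forall (w : W G) a1 a2 w', rew1 w a1 a2 w' = - rew2 w a1 a2 w') ->
  val_fuel (@rew2 _ G) p q k h = - val_fuel (@rew1 _ G) p q k h.
Proof.
move=> Hr; elim: k h => [|k IH] h /=; first by rewrite oppr0.
case: ifP => _; first by rewrite oppr0.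
rewrite -sumrN; apply: eq_bigr => a1 _; rewrite -sumrN; apply: eq_bigr => a2 _.
rewrite -sumrN; apply: eq_bigr => w' _.
by rewrite IH Hr -mulrN opprD opprK.
Qed.

Lemma valid_from_rcons (w : W G) h a1 a2 w' :
  valid_from w h ->
  let u := last w [seq x.2 | x <- h] in
  ~~ term u -> a1 \in legal1 u -> a2 \in legal2 u -> 0 < trans u a1 a2 w' ->
  valid_from w (rcons h (a1, a2, w')).
Proof.
elim: h w => [|[[c1 c2] u] t IH] w /=; first by move=> _ -> -> -> ->.
by move=> /and5P[-> -> -> -> Hv] H1 H2 H3 H4 /=; apply: IH.
Qed.

Definition step_weight (p : policy1 G) (q : policy2 G) (h : seq (step G))
    (a1 : A1 G) (a2 : A2 G) (w' : W G) : R :=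
  p (s1of h) a1 * q (s2of h) a2 * trans (hstate h) a1 a2 w'.

Section OneStep.
Hypothesis wf : wf_game G.
Variables (p : policy1 G) (q : policy2 G).
Hypotheses (Vp : valid_pol1 p) (Vq : valid_pol2 q).
Variable h : seq (step G).
Hypotheses (Hh : is_hist h) (Hnt : ~~ term (hstate h)).

Lemma step_weight_ge0 a1 a2 w' : 0 <= step_weight p q h a1 a2 w'.
Proof.
have [P1ge P1ill _] := @Vp _ Hh Hnt; have [P2ge P2ill _] := @Vq _ Hh Hnt.
case: wf => _ Htr _ _ _; rewrite /step_weight.
have [l1|/P1ill->] := boolP (a1 \in legal1 (hstate h)); last by rewrite !mul0r.
have [l2|/P2ill->] := boolP (a2 \in legal2 (hstate h)); last by rewrite mulr0 mul0r.
by have [trge _] := Htr _ a1 a2 Hnt l1 l2; rewrite !mulr_ge0.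
Qed.

Lemma step_weight_hist a1 a2 w' :
  step_weight p q h a1 a2 w' != 0 -> is_hist (rcons h (a1, a2, w')).
Proof.
have [_ P1ill _] := @Vp _ Hh Hnt; have [_ P2ill _] := @Vq _ Hh Hnt.
case: wf => _ Htr _ _ _; rewrite /step_weight => nz.
have l1 : a1 \in legal1 (hstate h).
  by apply: contraTT nz => /P1ill->; rewrite !mul0r eqxx.
have l2 : a2 \in legal2 (hstate h).
  by apply: contraTT nz => /P2ill->; rewrite mulr0 mul0r eqxx.
have [trge _] := Htr _ a1 a2 Hnt l1 l2.
have trpos : 0 < trans (hstate h) a1 a2 w'.
  by rewrite lt_def trge andbT; apply: contraNneq nz => ->; rewrite mulr0.
exact: valid_from_rcons.
Qed.

Lemma step_weight_sum :
  \sum_a1 \sum_a2 \sum_w' step_weight p q h a1 a2 w' = 1.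
Proof.
have [_ P1ill P1sum] := @Vp _ Hh Hnt; have [_ P2ill P2sum] := @Vq _ Hh Hnt.
case: wf => _ Htr _ _ _; rewrite -P1sum; apply: eq_bigr => a1 _.
have [l1|/P1ill p0] := boolP (a1 \in legal1 (hstate h)); last first.
  by rewrite p0 big1 // => a2 _; rewrite big1 // => w' _;
    rewrite /step_weight p0 !mul0r.
rewrite -[RHS]mulr1 -P2sum big_distrr; apply: eq_bigr => a2 _ /=.
have [l2|/P2ill q0] := boolP (a2 \in legal2 (hstate h)); last first.
  by rewrite q0 mulr0 big1 // => w' _; rewrite /step_weight q0 mulr0 mul0r.
have [_ trsum] := Htr _ a1 a2 Hnt l1 l2.
by rewrite /step_weight -big_distrr /= trsum mulr1.
Qed.

End OneStep.

Definition rew_bound : R :=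
  \sum_(t : W G * A1 G * A2 G * W G) `|rew1 t.1.1.1 t.1.1.2 t.1.2 t.2|.

Lemma rew_bound_ge0 : 0 <= rew_bound.
Proof. exact: sumr_ge0. Qed.

Lemma rew_le (w : W G) a1 a2 w' : `|rew1 w a1 a2 w'| <= rew_bound.
Proof. by rewrite /rew_bound (bigD1 (w, a1, a2, w')) //= lerDl sumr_ge0. Qed.

Lemma val_bound (wf : wf_game G) (p : policy1 G) (q : policy2 G) :
  valid_pol1 p -> valid_pol2 q -> forall k h, is_hist h ->
  `|val_fuel (@rew1 _ G) p q k h| <= k%:R * rew_bound.
Proof.
move=> Vp Vq; elim=> [|k IH] h Hh /=; first by rewrite normr0 mul0r.
case: ifP => Hterm; first by rewrite normr0 mulr_ge0 ?rew_bound_ge0.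
have Hnt : ~~ term (hstate h) by rewrite Hterm.
set c := rew_bound + k%:R * rew_bound.
have -> : k.+1%:R * rew_bound =
    \sum_a1 \sum_a2 \sum_w' step_weight p q h a1 a2 w' * c.
  rewrite -[k.+1]addn1 natrD mulrDl mul1r addrC -/c.
  rewrite -[LHS]mul1r -(step_weight_sum wf Vp Vq Hh Hnt) !big_distrl.
  by apply: eq_bigr => a1 _; rewrite big_distrl; apply: eq_bigr => a2 _;
    rewrite big_distrl.
apply: (le_trans (ler_norm_sum _ _ _)); apply: ler_sum => a1 _.
apply: (le_trans (ler_norm_sum _ _ _)); apply: ler_sum => a2 _.
apply: (le_trans (ler_norm_sum _ _ _)); apply: ler_sum => w' _.
rewrite -/(step_weight p q h a1 a2 w').
have [->|nz] := eqVneq (step_weight p q h a1 a2 w') 0.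
  by rewrite !mul0r normr0.
rewrite normrM ger0_norm ?(step_weight_ge0 wf) // ler_wpM2l
  ?(step_weight_ge0 wf) //.
apply: le_trans (ler_normD _ _) _; apply: lerD; first exact: rew_le.
by apply: IH; apply: (step_weight_hist wf Vp Vq Hh Hnt).
Qed.

End Histories.

Section Subgame.
Variable R : realType.
Variable G : game R.
Variables (s : pubstate G) (K : kernel G) (b2 : info2 G -> R).
Hypothesis wf : wf_game G.

Lemma mem_Hpub h : h \in Hpub s -> is_hist h /\ size h = size s.
Proof.
case/mapP => t; rewrite mem_enum inE => /andP[Hh _] ->; split => //.
exact: size_tuple.
Qed.

Lemma mem_S1pub h : h \in Hpub s -> s1of h \in S1pub s.
Proof. by move=> Hh; rewrite mem_undup; apply: map_f. Qed.

Lemma size_S1pub s1 : s1 \in S1pub s -> size s1 = size s.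
Proof.
rewrite mem_undup => /mapP[h /mem_Hpub[_ <-] ->].
exact: size_info1_from.
Qed.

Definition infoval_pi (q1 : policy1 G) (q2 : policy2 G) (s1 : info1 G) : R :=
  \sum_(h <- Hpub s | s1of h == s1) K b2 s1 h * v1 q1 q2 h.

Lemma V1pi_infostates (x : info1 G -> R) q1 q2 :
  V1pi s K x b2 q1 q2 = \sum_(s1 <- S1pub s) x s1 * infoval_pi q1 q2 s1.
Proof.
symmetry.
transitivity (\sum_(s1 <- S1pub s) \sum_(h <- Hpub s)
   (if s1of h == s1 then x s1 * (K b2 s1 h * v1 q1 q2 h) else 0)).
  by apply: eq_bigr => s1 _; rewrite /infoval_pi big_distrr /= big_mkcond.
rewrite exchange_big; apply: eq_big_seq => h Hh /=.
rewrite (bigD1_seq (s1of h)) ?mem_S1pub ?undup_uniq //= eqxx big1 => [|s1].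
  by rewrite addr0 /pbs_prob mulrA.
by rewrite eq_sym => /negPf ->.
Qed.

Lemma V2pi_opp x q1 q2 : V2pi s K x b2 q1 q2 = - V1pi s K x b2 q1 q2.
Proof.
case: wf => _ _ Hr _ _.
rewrite /V2pi /V1pi -sumrN; apply: eq_bigr => h _.
by rewrite /v2 /v1 val_fuel_opp // mulrN.
Qed.

Definition infoval_bound (s1 : info1 G) : R :=
  \sum_(h <- Hpub s | s1of h == s1) `|K b2 s1 h| * ((horizon G)%:R * rew_bound G).

Lemma infoval_pi_bound (q1 : policy1 G) (q2 : policy2 G) s1 : valid_pol1 q1 -> valid_pol2 q2 ->
  `|infoval_pi q1 q2 s1| <= infoval_bound s1.
Proof.
move=> V1 V2; apply: le_trans (ler_norm_sum _ _ _) _.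
rewrite big_seq_cond [X in _ <= X]big_seq_cond; apply: ler_sum => h /andP[Hh _].
by rewrite normrM ler_wpM2l //; apply: val_bound => //; case: (mem_Hpub Hh).
Qed.

(* Hence the supremum defining infoval1 is finite: it dominates the value of
   every valid policy of player 1 and is bounded below. *)
Lemma infoval_pi_le (q1 : policy1 G) (q2 : policy2 G) s1 : valid_pol1 q1 -> valid_pol2 q2 ->
  infoval_pi q1 q2 s1 <= infoval1 s K b2 q2 s1.
Proof.
move=> V1 V2; apply: ub_le_sup; last by exists q1.
exists (infoval_bound s1) => r [q [Vq ->]].
exact: le_trans (ler_norm _) (infoval_pi_bound _ Vq V2).
Qed.

Lemma infoval1_ge (q1 : policy1 G) (q2 : policy2 G) s1 : valid_pol1 q1 -> valid_pol2 q2 ->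
  - infoval_bound s1 <= infoval1 s K b2 q2 s1.
Proof.
move=> V1 V2; apply: le_trans (infoval_pi_le s1 V1 V2).
by have := infoval_pi_bound s1 V1 V2; rewrite ler_norml => /andP[].
Qed.

Definition splice (s1 : info1 G) (r1 q1 : policy1 G) : policy1 G :=
  fun t => if take (size s1) t == s1 then r1 t else q1 t.

Lemma valid_splice s1 (r1 q1 : policy1 G) :
  valid_pol1 r1 -> valid_pol1 q1 -> valid_pol1 (splice s1 r1 q1).
Proof. by move=> Vr Vq h Hh Hnt; rewrite /splice; case: ifP => _; auto. Qed.

(* By perfect recall, splicing at s1 changes the value of s1 only, and there
   it is the value of r1. *)
Lemma infoval_pi_splice s1 (r1 q1 : policy1 G) q2 s' : s1 \in S1pub s -> s' \in S1pub s ->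
  infoval_pi (splice s1 r1 q1) q2 s' =
  if s' == s1 then infoval_pi r1 q2 s1 else infoval_pi q1 q2 s'.
Proof.
move=> Hs1 Hs'; rewrite /infoval_pi; case: eqP => [->|ne].
  rewrite big_seq_cond [RHS]big_seq_cond; apply: eq_bigr => h /andP[Hh /eqP Hs].
  congr (_ * _); apply: val_fuel_local => e.
  by rewrite /splice s1of_cat -Hs take_size_cat // eqxx.
rewrite big_seq_cond [RHS]big_seq_cond; apply: eq_bigr => h /andP[Hh /eqP Hs].
congr (_ * _); apply: val_fuel_local => e.
have sz : size (s1of h) = size s1.
  by rewrite (size_S1pub Hs1) /s1of size_info1_from; case: (mem_Hpub Hh).
by rewrite /splice s1of_cat take_size_cat // Hs; case: eqP.
Qed.

Lemma NE_best_response (x : info1 G -> R) (q1 : policy1 G) (q2 : policy2 G) s1 :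
  is_NE s K x b2 q1 q2 -> s1 \in S1pub s -> 0 < x s1 ->
  infoval1 s K b2 q2 s1 = infoval_pi q1 q2 s1.
Proof.
case=> V1 V2 N1 _ Hs1 xpos.
have no_gain : forall r1, valid_pol1 r1 -> infoval_pi r1 q2 s1 <= infoval_pi q1 q2 s1.
  move=> r1 Vr; have := N1 _ (valid_splice s1 Vr V1); rewrite !V1pi_infostates.
  rewrite (bigD1_seq s1) ?undup_uniq // [X in _ <= X](bigD1_seq s1) ?undup_uniq //.
  have -> : \sum_(s' <- S1pub s | s' != s1) x s' * infoval_pi (splice s1 r1 q1) q2 s'
          = \sum_(s' <- S1pub s | s' != s1) x s' * infoval_pi q1 q2 s'.
    rewrite big_seq_cond [RHS]big_seq_cond; apply: eq_bigr => s' /andP[Hs' ne].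
    by rewrite infoval_pi_splice // (negPf ne).
  rewrite infoval_pi_splice // eqxx.
  by rewrite lerD2r ler_pM2l.
apply/eqP; rewrite eq_le infoval_pi_le // andbT.
apply: ge_sup; first by exists (infoval_pi q1 q2 s1); exists q1.
by move=> r [r1 [Vr ->]]; exact: no_gain.
Qed.

Local Notation mass y := (\sum_(s1 <- S1pub s) y s1).

Definition belief_payoff (y : info1 G -> R) (q2 : policy2 G) : R :=
  \sum_(s1 <- S1pub s) y s1 * infoval1 s K b2 q2 s1.

Definition payoff_set (y : info1 G -> R) : set R :=
  [set r | exists q2 : policy2 G, valid_pol2 q2 /\ r = belief_payoff y q2].

Lemma belief_payoff_comb (x y : info1 G -> R) t q2 :
  belief_payoff (fun s1 => t * x s1 + (1 - t) * y s1) q2 =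
  t * belief_payoff x q2 + (1 - t) * belief_payoff y q2.
Proof.
by rewrite /belief_payoff !big_distrr -big_split; apply: eq_bigr => s1 _ /=; ring.
Qed.

Lemma payoff_set_lbound (q1 : policy1 G) y :
  valid_pol1 q1 -> nonneg_on s y -> has_lbound (payoff_set y).
Proof.
move=> V1 Hy; exists (- \sum_(s1 <- S1pub s) y s1 * infoval_bound s1).
move=> r [q2 [V2 ->]]; rewrite /belief_payoff -sumrN.
rewrite big_seq [X in _ <= X]big_seq; apply: ler_sum => s1 Hs1.
by rewrite -mulrN ler_wpM2l ?Hy //; apply: infoval1_ge V1 V2.
Qed.

Lemma belief_payoff_NE x (q1 : policy1 G) (q2 : policy2 G) :
  is_dist1 s x -> is_NE s K x b2 q1 q2 ->
  belief_payoff x q2 = V1pi s K x b2 q1 q2.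
Proof.
move=> [Hx _] NE; rewrite V1pi_infostates /belief_payoff.
apply: eq_big_seq => s1 Hs1.
have [<-|xpos] := eqVneq 0 (x s1); first by rewrite !mul0r.
by rewrite (NE_best_response NE Hs1) // lt_def eq_sym xpos Hx.
Qed.

Lemma inf_payoff_NE x (q1 : policy1 G) (q2 : policy2 G) :
  is_dist1 s x -> is_NE s K x b2 q1 q2 ->
  inf (payoff_set x) = V1pi s K x b2 q1 q2.
Proof.
move=> Dx NE; have [V1 V2 _ N2] := NE; have [Hx _] := Dx.
apply/eqP; rewrite eq_le; apply/andP; split.
  rewrite -(belief_payoff_NE Dx NE).
  by apply: ge_inf; [exact: payoff_set_lbound V1 Hx | exists q2].
apply: lb_le_inf; first by exists (belief_payoff x q2); exists q2.
move=> r [q2' [V2' ->]].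
have := N2 q2' V2'; rewrite !V2pi_opp lerN2 => /le_trans; apply.
rewrite V1pi_infostates /belief_payoff big_seq [X in _ <= X]big_seq.
by apply: ler_sum => s1 Hs1; rewrite ler_wpM2l ?Hx ?infoval_pi_le.
Qed.

(* The concave extension of V_1 to R_{>=0}^{S_1(s_pub)}; the linear correction
   c * (1 - mass y) vanishes on distributions and shifts supergradients by c. *)
Definition V1ext (c : R) (y : info1 G -> R) : R :=
  inf (payoff_set y) + c * (1 - mass y).

Lemma V1ext_dist c x (q1 : policy1 G) (q2 : policy2 G) :
  is_dist1 s x -> is_NE s K x b2 q1 q2 -> V1ext c x = V1pi s K x b2 q1 q2.
Proof.
move=> Dx NE; rewrite /V1ext (inf_payoff_NE Dx NE).
by case: Dx => _ ->; rewrite subrr mulr0 addr0.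
Qed.

(* An infimum of linear functions is concave. *)
Lemma V1ext_concave c (q1 : policy1 G) (q2 : policy2 G) :
  valid_pol1 q1 -> valid_pol2 q2 -> concave_on s (V1ext c).
Proof.
move=> V1 V2 x y t Hx Hy /andP[t0 t1].
set z := fun s1 => t * x s1 + (1 - t) * y s1.
have mass_z : mass z = t * mass x + (1 - t) * mass y.
  by rewrite !big_distrr -big_split.
have inf_z : t * inf (payoff_set x) + (1 - t) * inf (payoff_set y)
             <= inf (payoff_set z).
  apply: lb_le_inf; first by exists (belief_payoff z q2); exists q2.
  move=> r [q2' [V2' ->]]; rewrite belief_payoff_comb.
  by apply: lerD; apply: ler_wpM2l; rewrite ?subr_ge0 //;
    apply: ge_inf; [exact: payoff_set_lbound V1 Hx | exists q2'
                   | exact: payoff_set_lbound V1 Hy | exists q2'].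
rewrite /V1ext mass_z; lra.
Qed.

(* At an equilibrium belief b1, the payoff against the equilibrium policy p2
   touches the infimum, so  infoval1 s1 p2 - V_1(b1, b2)  is a supergradient. *)
Lemma V1ext_supergradient b1 (p1 : policy1 G) (p2 : policy2 G) :
  is_dist1 s b1 -> is_NE s K b1 b2 p1 p2 ->
  forall y, nonneg_on s y ->
    V1ext (V1pi s K b1 b2 p1 p2) y <= V1ext (V1pi s K b1 b2 p1 p2) b1 +
      \sum_(s1 <- S1pub s)
        (infoval1 s K b2 p2 s1 - V1pi s K b1 b2 p1 p2) * (y s1 - b1 s1).
Proof.
move=> Db1 NE y Hy; set V0 := V1pi s K b1 b2 p1 p2; have [V1 V2 _ _] := NE.
have inf_y : inf (payoff_set y) <= belief_payoff y p2.
  by apply: ge_inf; [exact: payoff_set_lbound V1 Hy | exists p2].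
have lin : \sum_(s1 <- S1pub s) (infoval1 s K b2 p2 s1 - V0) * (y s1 - b1 s1) =
    belief_payoff y p2 - belief_payoff b1 p2 - V0 * mass y + V0 * mass b1.
  rewrite /belief_payoff !big_distrr -!sumrB -big_split /=.
  by apply: eq_bigr => s1 _; ring.
rewrite (V1ext_dist _ Db1 NE) lin (belief_payoff_NE Db1 NE) /V1ext.
by case: Db1 => _ ->; rewrite -/V0; lra.
Qed.

End Subgame.

Unset Implicit Arguments.
Local Close Scope classical_set_scope.

Theorem theorem1 (R : realType) (G : game R) (s : pubstate G) (K : kernel G)
    (b1 : info1 G -> R) (b2 : info2 G -> R)
    (p1 : policy1 G) (p2 : policy2 G) :
  wf_game G ->
  is_dist1 s b1 -> is_dist2 s b2 ->
  kernel_ok s K b2 ->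
  is_NE s K b1 b2 p1 p2 ->
  exists (Vt : (info1 G -> R) -> R) (g : info1 G -> R),
    [/\ concave_on s Vt,
        (forall x, is_dist1 s x ->
           forall q1 q2, is_NE s K x b2 q1 q2 -> Vt x = V1pi s K x b2 q1 q2),
        (forall y, nonneg_on s y ->
           Vt y <= Vt b1 + \sum_(s1 <- S1pub s) g s1 * (y s1 - b1 s1)) &
        (forall s1, s1 \in S1pub s ->
           infoval1 s K b2 p2 s1 = V1pi s K b1 b2 p1 p2 + g s1)].
Proof.
move=> wf Db1 _ _ NE; have [Vp1 Vp2 _ _] := NE.
exists (V1ext s K b2 (V1pi s K b1 b2 p1 p2)),
  (fun s1 => infoval1 s K b2 p2 s1 - V1pi s K b1 b2 p1 p2); split.
- exact: V1ext_concave Vp1 Vp2.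
- by move=> x Dx q1 q2; apply: V1ext_dist.
- by move=> y /(V1ext_supergradient wf Db1 NE).
- by move=> s1 _; rewrite addrC subrK.
Qed.
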